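(* Let $T$ be a complete affine $L$-theory and $M\models T$. Then every extreme type $p\in E_n(T)$ is the limit, in the logic topology, of types of tuples realized in $M$.
   Context: Affine continuous logic: structures are complete metric spaces of diameter $\le1$ with Lipschitz interpretations; affine formulas built from atomic $1,d(t_1,t_2),R(\bar t)$ by $+$, real scalars, $\sup$, $\inf$. $\mathbb D_n(T)$: affine formulas in $n$ free variables modulo $T$-equivalence, ordered by $0\le\phi$ iff $T\models 0\le\inf_{\bar x}\phi$. An $n$-type is a positive linear functional $p$ on $\mathbb D_n(T)$ with $p(1)=1$; $K_n(T)$ is the set of $n$-types with the logic topology (weak* topology: $p_k\to p$ iff $p_k(\phi)\to p(\phi)$ for all $\phi$); $E_n(T)$ is its set of extreme points. The type of $\bar a\in M^n$ is $tp(\bar a)(\phi)=\phi^M(\bar a)$. *)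

From Stdlib Require Fin Compare_dec.
From Stdlib Require Import Reals Lra List.
From Coquelicot Require Import Coquelicot.
Open Scope R_scope.
Set Implicit Arguments.

Record Language := {
  fsym : Type;
  farity : fsym -> nat;
  flip : fsym -> R;
  rsym : Type;
  rarity : rsym -> nat;
  rlip : rsym -> R
}.

(** * Terms and affine formulas (de Bruijn variables; sup/inf bind variable 0) *)
Inductive term (L : Language) : Type :=
| TVar : nat -> term L
| TApp : forall f : fsym L, (Fin.t (farity L f) -> term L) -> term L.

Inductive formula (L : Language) : Type :=
| F_one : formula L
| F_dist : term L -> term L -> formula L
| F_rel : forall r : rsym L, (Fin.t (rarity L r) -> term L) -> formula L
| F_add : formula L -> formula L -> formula L
| F_scale : R -> formula L -> formula L
| F_sup : formula L -> formula L
| F_inf : formula L -> formula L.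

Arguments TVar {L}.
Arguments F_one {L}.

Fixpoint term_wf {L} (n : nat) (t : term L) : Prop :=
  match t with
  | TVar i => (i < n)%nat
  | TApp f args => forall j, term_wf n (args j)
  end.

Fixpoint formula_wf {L} (n : nat) (phi : formula L) : Prop :=
  match phi with
  | F_one => True
  | F_dist t1 t2 => term_wf n t1 /\ term_wf n t2
  | F_rel r args => forall j, term_wf n (args j)
  | F_add phi psi => formula_wf n phi /\ formula_wf n psi
  | F_scale _ phi => formula_wf n phi
  | F_sup phi => formula_wf (S n) phi
  | F_inf phi => formula_wf (S n) phi
  end.

Record Structure (L : Language) := {
  carrier :> Type;
  dist : carrier -> carrier -> R;
  point : carrier;
  dist_refl : forall x, dist x x = 0;
  dist_sep : forall x y, dist x y = 0 -> x = y;
  dist_sym : forall x y, dist x y = dist y x;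
  dist_tri : forall x y z, dist x z <= dist x y + dist y z;
  dist_diam : forall x y, dist x y <= 1;
  dist_complete : forall u : nat -> carrier,
    (forall eps, 0 < eps -> exists N, forall m k, (N <= m)%nat -> (N <= k)%nat ->
        dist (u m) (u k) < eps) ->
    exists x, forall eps, 0 < eps -> exists N, forall k, (N <= k)%nat -> dist (u k) x < eps;
  finterp : forall f : fsym L, (Fin.t (farity L f) -> carrier) -> carrier;
  finterp_lip : forall f a b delta, 0 <= delta ->
    (forall i, dist (a i) (b i) <= delta) ->
    dist (finterp f a) (finterp f b) <= flip L f * delta;
  rinterp : forall r : rsym L, (Fin.t (rarity L r) -> carrier) -> R;
  rinterp_lip : forall r a b delta, 0 <= delta ->
    (forall i, dist (a i) (b i) <= delta) ->
    Rabs (rinterp r a - rinterp r b) <= rlip L r * delta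
}.

Arguments dist {L s}.
Arguments finterp {L s}.
Arguments rinterp {L s}.
Arguments point {L} s.

Definition scons {A : Type} (x : A) (a : nat -> A) : nat -> A :=
  fun i => match i with O => x | S k => a k end.

Fixpoint teval {L} (M : Structure L) (t : term L) (a : nat -> M) : M :=
  match t with
  | TVar i => a i
  | TApp f args => finterp f (fun j => teval M (args j) a)
  end.

Fixpoint eval {L} (M : Structure L) (phi : formula L) (a : nat -> M) : R :=
  match phi with
  | F_one => 1
  | F_dist t1 t2 => dist (teval M t1 a) (teval M t2 a)
  | F_rel r args => rinterp r (fun j => teval M (args j) a)
  | F_add phi psi => eval M phi a + eval M psi a
  | F_scale c phi => c * eval M phi a
  | F_sup phi => real (Lub_Rbar (fun v => exists x : M, v = eval M phi (scons x a)))
  | F_inf phi => real (Glb_Rbar (fun v => exists x : M, v = eval M phi (scons x a)))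
  end.

Definition Theory (L : Language) := formula L -> Prop.

Definition models {L} (M : Structure L) (T : Theory L) : Prop :=
  forall phi, T phi -> forall a : nat -> M, 0 <= eval M phi a.

Definition entails_nonneg {L} (T : Theory L) (phi : formula L) : Prop :=
  forall M : Structure L, models M T -> forall a : nat -> M, 0 <= eval M phi a.

Definition T_equiv {L} (T : Theory L) (phi psi : formula L) : Prop :=
  forall M : Structure L, models M T -> forall a : nat -> M, eval M phi a = eval M psi a.

Definition complete_theory {L} (T : Theory L) : Prop :=
  (exists M : Structure L, models M T) /\
  forall phi, formula_wf 0 phi ->
    forall (M N : Structure L) (a : nat -> M) (b : nat -> N),
      models M T -> models N T -> eval M phi a = eval N phi b.

(** * n-types: positive linear functionals on D_n(T) with p(1) = 1,
      represented on representatives (formulas in n free variables). *)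
Record is_type {L} (T : Theory L) (n : nat) (p : formula L -> R) : Prop := {
  type_resp : forall phi psi, formula_wf n phi -> formula_wf n psi ->
     T_equiv T phi psi -> p phi = p psi;
  type_add : forall phi psi, formula_wf n phi -> formula_wf n psi ->
     p (F_add phi psi) = p phi + p psi;
  type_scale : forall c phi, formula_wf n phi -> p (F_scale c phi) = c * p phi;
  type_pos : forall phi, formula_wf n phi -> entails_nonneg T phi -> 0 <= p phi;
  type_one : p F_one = 1
}.

Definition type_eq {L} (n : nat) (p q : formula L -> R) : Prop :=
  forall phi, formula_wf n phi -> p phi = q phi.

Definition extreme_type {L} (T : Theory L) (n : nat) (p : formula L -> R) : Prop :=
  is_type T n p /\
  forall (q1 q2 : formula L -> R) (lam : R),
    is_type T n q1 -> is_type T n q2 -> 0 < lam < 1 ->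
    type_eq n p (fun phi => lam * q1 phi + (1 - lam) * q2 phi) ->
    type_eq n q1 q2.

Definition tuple_env {L} (M : Structure L) (n : nat) (a : Fin.t n -> M) : nat -> M :=
  fun i => match Compare_dec.lt_dec i n with
           | left h => a (Fin.of_nat_lt h)
           | right _ => point M
           end.

Definition tp {L} (M : Structure L) (n : nat) (a : Fin.t n -> M) : formula L -> R :=
  fun phi => eval M phi (tuple_env M a).

(** p lies in the closure, in the logic (weak-star) topology on K_n(T), of the
    set of types realized in M: every basic weak-star neighbourhood of p
    (given by finitely many formulas and eps > 0) contains some tp(a), a in M^n.
    Equivalently, p is the limit of a net of realized types. *)
Definition limit_of_realized_types {L} (M : Structure L) (n : nat) (p : formula L -> R) : Prop :=
  forall (phis : list (formula L)) (eps : R),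
    0 < eps -> List.Forall (formula_wf n) phis ->
    exists a : Fin.t n -> M,
      List.Forall (fun phi => Rabs (tp M a phi - p phi) < eps) phis.

(* Say that a set A of assignments in M dominates the type p if p(phi) <= c
   whenever phi <= c on A.  By completeness of T, the set of all assignments
   dominates every type.  The key step is that if the union of A and B
   dominates an extreme type p, then A or B does: Hahn-Banach extends p, read
   on the diagonal of the space of pairs (phi on A, psi on B), to a functional
   below the supremum over the disjoint union of A and B.  Its two components
   write p as lam q_A + (1 - lam) q_B with types q_A, q_B dominated by A and B,
   and extremality forces p = q_A (or lam is 0 or 1).  Repeated bisection of
   the ranges of finitely many formulas then gives a dominating set on which
   each of them varies by less than eps, and any assignment in it realizes a
   type eps-close to p on these formulas. *)

From Stdlib Require Import Reals Lra Classical ClassicalEpsilon FunctionalExtensionality PropExtensionality Lia.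
From Coquelicot Require Import Coquelicot.
From mathcomp Require boolp classical_sets.
Open Scope R_scope.
Set Implicit Arguments.
Unset Strict Implicit.
Set Bullet Behavior "Strict Subproofs".

Definition vadd {Y} (u v : Y -> R) : Y -> R := fun y => u y + v y.
Definition vscale {Y} (a : R) (u : Y -> R) : Y -> R := fun y => a * u y.
Definition vzero {Y} : Y -> R := fun _ => 0.

Ltac vector_ring :=
  apply functional_extensionality; intro; unfold vadd, vscale, vzero; field.

Lemma premaximal_exists (T : Type) (t0 : T) (le : T -> T -> Prop) :
  (forall t, le t t) -> (forall r s t, le r s -> le s t -> le r t) ->
  (forall A : T -> Prop, (forall s t, A s -> A t -> le s t \/ le t s) ->
     exists t, forall s, A s -> le s t) ->
  exists t, forall s, le t s -> le s t.
Proof.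
  intros refl trans chains.
  destruct (@classical_sets.ZL_preorder T t0 (fun s t => boolp.asbool (le s t)))
    as [t tmax].
  - intro t; apply boolp.asboolT, refl.
  - intros r s t Hrs Hst; apply boolp.asboolT.
    exact (trans r s t (boolp.asboolW Hrs) (boolp.asboolW Hst)).
  - intros A Atot. destruct (chains A) as [t Ht].
    + intros s t As At.
      destruct (Atot s t As At) as [H|H]; [left|right]; exact (boolp.asboolW H).
    + exists t; intros s As; apply boolp.asboolT, Ht, As.
  - exists t; intros s Hts.
    exact (boolp.asboolW (tmax s (boolp.asboolT Hts))).
Qed.

Section HahnBanach.
Variable Y : Type.
Variables (W D : (Y -> R) -> Prop) (S f : (Y -> R) -> R).
Hypothesis W_add : forall u v, W u -> W v -> W (vadd u v).
Hypothesis W_scale : forall a u, W u -> W (vscale a u).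
Hypothesis D_add : forall u v, D u -> D v -> D (vadd u v).
Hypothesis D_scale : forall a u, D u -> D (vscale a u).
Hypothesis D_zero : D vzero.
Hypothesis D_W : forall u, D u -> W u.
Hypothesis S_add : forall u v, W u -> W v -> S (vadd u v) <= S u + S v.
Hypothesis S_scale : forall a u, W u -> 0 < a -> S (vscale a u) = a * S u.
Hypothesis f_add : forall u v, D u -> D v -> f (vadd u v) = f u + f v.
Hypothesis f_scale : forall a u, D u -> f (vscale a u) = a * f u.
Hypothesis f_le_S : forall u, D u -> f u <= S u.

(* Partial extensions of [f] are handled through their graphs, so that the
   union of a chain needs no choice of values. *)
Record extension (G : (Y -> R) -> R -> Prop) : Prop := {
  extension_D : forall u, D u -> G u (f u);
  extension_W : forall u r, G u r -> W u;
  extension_fun : forall u r s, G u r -> G u s -> r = s;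
  extension_add : forall u v r s, G u r -> G v s -> G (vadd u v) (r + s);
  extension_scale : forall a u r, G u r -> G (vscale a u) (a * r);
  extension_le : forall u r, G u r -> r <= S u
}.

Definition graph_sub (G G' : (Y -> R) -> R -> Prop) : Prop :=
  forall u r, G u r -> G' u r.

Lemma f_zero : f vzero = 0.
Proof.
  replace vzero with (@vscale Y 0 vzero) by vector_ring.
  rewrite f_scale by exact D_zero. ring.
Qed.

Lemma extension_zero G : extension G -> G vzero 0.
Proof. intros HG. rewrite <- f_zero. exact (extension_D HG D_zero). Qed.

Lemma graph_f_extension : extension (fun u r => D u /\ r = f u).
Proof.
  constructor.
  - intros u Du; split; auto.
  - intros u r [Du _]; auto.
  - intros u r s [_ Hr] [_ Hs]; congruence.
  - intros u v r s [Du Hr] [Dv Hs]; subst; split; auto. symmetry; auto.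
  - intros a u r [Du Hr]; subst; split; auto. symmetry; auto.
  - intros u r [Du Hr]; subst; auto.
Qed.

Section Chain.
Variable C : ((Y -> R) -> R -> Prop) -> Prop.
Hypothesis C_ext : forall G, C G -> extension G.
Hypothesis C_total : forall G G', C G -> C G' -> graph_sub G G' \/ graph_sub G' G.

Definition chain_union (u : Y -> R) (r : R) : Prop :=
  (D u /\ r = f u) \/ exists G, C G /\ G u r.

Lemma chain_union_local u r v s : chain_union u r -> chain_union v s ->
  exists G, extension G /\ graph_sub G chain_union /\ G u r /\ G v s.
Proof.
  assert (lift : forall G, C G -> graph_sub G chain_union)
    by (intros G CG w t Gw; right; eauto).
  assert (base : forall G, C G -> graph_sub (fun u r => D u /\ r = f u) G)
    by (intros G CG w t [Dw ->]; exact (extension_D (C_ext CG) Dw)).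
  intros [Hu|[G [CG Gu]]] [Hv|[G' [CG' Gv]]].
  - exists (fun u r => D u /\ r = f u).
    split; [exact graph_f_extension|].
    split; [intros w t Hw; left; exact Hw | auto].
  - exists G'; split; [auto|split; [auto|split; [exact (base G' CG' _ _ Hu)|exact Gv]]].
  - exists G; split; [auto|split; [auto|split; [exact Gu|exact (base G CG _ _ Hv)]]].
  - destruct (C_total CG CG') as [H|H].
    + exists G'; split; [auto|split; [auto|split; [exact (H _ _ Gu)|exact Gv]]].
    + exists G; split; [auto|split; [auto|split; [exact Gu|exact (H _ _ Gv)]]].
Qed.

Lemma chain_union_extension : extension chain_union.
Proof.
  constructor.
  - intros u Du; left; auto.
  - intros u r Hu. destruct (chain_union_local Hu Hu) as [G [HG [_ [Gu _]]]].
    exact (extension_W HG Gu).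
  - intros u r s Hr Hs. destruct (chain_union_local Hr Hs) as [G [HG [_ [Gr Gs]]]].
    exact (extension_fun HG Gr Gs).
  - intros u v r s Hu Hv. destruct (chain_union_local Hu Hv) as [G [HG [sub [Gu Gv]]]].
    exact (sub _ _ (extension_add HG Gu Gv)).
  - intros a u r Hu. destruct (chain_union_local Hu Hu) as [G [HG [sub [Gu _]]]].
    exact (sub _ _ (extension_scale HG a Gu)).
  - intros u r Hu. destruct (chain_union_local Hu Hu) as [G [HG [_ [Gu _]]]].
    exact (extension_le HG Gu).
Qed.

End Chain.

Section OneStep.
Variable G : (Y -> R) -> R -> Prop.
Hypothesis HG : extension G.
Variable x0 : Y -> R.
Hypothesis W_x0 : W x0.
Hypothesis x0_new : forall r, ~ G x0 r.

(* The value at [x0] is squeezed by [r + s <= S (y + z) <= S (y - x0) + S (z + x0)]. *)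
Lemma extension_const : exists c,
  (forall y r, G y r -> r - S (vadd y (vscale (-1) x0)) <= c) /\
  (forall z s, G z s -> c <= S (vadd z x0) - s).
Proof.
  assert (key : forall y r z s, G y r -> G z s ->
            r - S (vadd y (vscale (-1) x0)) <= S (vadd z x0) - s).
  { intros y r z s Gy Gz.
    assert (Wy := extension_W HG Gy). assert (Wz := extension_W HG Gz).
    assert (Hsum : r + s <= S (vadd (vadd y (vscale (-1) x0)) (vadd z x0))).
    { replace (vadd (vadd y (vscale (-1) x0)) (vadd z x0)) with (vadd y z) by vector_ring.
      exact (extension_le HG (extension_add HG Gy Gz)). }
    assert (Hsub : S (vadd (vadd y (vscale (-1) x0)) (vadd z x0))
                   <= S (vadd y (vscale (-1) x0)) + S (vadd z x0)) by auto.
    lra. }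
  set (E := fun t => exists y r, G y r /\ t = r - S (vadd y (vscale (-1) x0))).
  destruct (completeness E) as [c [c_ub c_lub]].
  - exists (S (vadd vzero x0) - 0). intros t [y [r [Gy ->]]].
    exact (key _ _ _ _ Gy (extension_zero HG)).
  - exists (0 - S (vadd vzero (vscale (-1) x0))), vzero, 0.
    split; [exact (extension_zero HG) | reflexivity].
  - exists c; split.
    + intros y r Gy. apply c_ub. exists y, r; auto.
    + intros z s Gz. apply c_lub. intros t [y [r [Gy ->]]]. exact (key _ _ _ _ Gy Gz).
Qed.

Lemma decomposition_unique y1 y2 r1 r2 a1 a2 : G y1 r1 -> G y2 r2 ->
  vadd y1 (vscale a1 x0) = vadd y2 (vscale a2 x0) -> a1 = a2 /\ y1 = y2.
Proof.
  intros G1 G2 E.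
  assert (Ea : a1 = a2).
  { apply NNPP; intro Ne.
    assert (Ex0 : x0 = vscale (/ (a1 - a2)) (vadd y2 (vscale (-1) y1))).
    { apply functional_extensionality; intro w.
      apply (f_equal (fun F => F w)) in E. unfold vadd, vscale in *.
      replace (y2 w + -1 * y1 w) with ((a1 - a2) * x0 w) by lra.
      field; lra. }
    apply (x0_new (r := / (a1 - a2) * (r2 + -1 * r1))). rewrite Ex0.
    exact (extension_scale HG _ (extension_add HG G2 (extension_scale HG (-1) G1))). }
  subst a2. split; auto.
  apply functional_extensionality; intro w.
  apply (f_equal (fun F => F w)) in E. unfold vadd, vscale in E. lra.
Qed.

Section Constant.
Variable c : R.
Hypothesis c_ge : forall y r, G y r -> r - S (vadd y (vscale (-1) x0)) <= c.
Hypothesis c_le : forall z s, G z s -> c <= S (vadd z x0) - s.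

Lemma extension_step_le y r a : G y r -> r + a * c <= S (vadd y (vscale a x0)).
Proof.
  intros Gy. assert (Wy := extension_W HG Gy).
  destruct (Rtotal_order a 0) as [Ha|[->|Ha]].
  - assert (Gya := extension_scale HG (/ - a) Gy).
    replace (vadd y (vscale a x0)) with (vscale (- a) (vadd (vscale (/ - a) y) (vscale (-1) x0)))
      by (vector_ring; lra).
    rewrite S_scale by first [lra | auto].
    specialize (c_ge Gya).
    apply (Rmult_le_compat_l (- a)) in c_ge; [|lra].
    replace (- a * (/ - a * r - S (vadd (vscale (/ - a) y) (vscale (-1) x0))))
      with (r + a * S (vadd (vscale (/ - a) y) (vscale (-1) x0))) in c_ge by (field; lra).
    lra.
  - replace (vadd y (vscale 0 x0)) with y by vector_ring.
    rewrite Rmult_0_l, Rplus_0_r. exact (extension_le HG Gy).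
  - assert (Gya := extension_scale HG (/ a) Gy).
    replace (vadd y (vscale a x0)) with (vscale a (vadd (vscale (/ a) y) x0))
      by (vector_ring; lra).
    rewrite S_scale by first [lra | auto].
    specialize (c_le Gya).
    apply (Rmult_le_compat_l a) in c_le; [|lra].
    replace (a * (S (vadd (vscale (/ a) y) x0) - / a * r))
      with (a * S (vadd (vscale (/ a) y) x0) - r) in c_le by (field; lra).
    lra.
Qed.

Definition extension_step (u : Y -> R) (t : R) : Prop :=
  exists y r a, G y r /\ u = vadd y (vscale a x0) /\ t = r + a * c.

Lemma extension_step_extension : extension extension_step.
Proof.
  constructor.
  - intros u Du. exists u, (f u), 0.
    split; [exact (extension_D HG Du)|]. split; [vector_ring|ring].
  - intros u t [y [r [a [Gy [-> ->]]]]].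
    exact (W_add (extension_W HG Gy) (W_scale a W_x0)).
  - intros u t t' [y [r [a [Gy [-> ->]]]]] [y' [r' [a' [Gy' [E ->]]]]].
    destruct (decomposition_unique Gy Gy' E) as [<- <-].
    rewrite (extension_fun HG Gy Gy'); reflexivity.
  - intros u v t t' [y [r [a [Gy [-> ->]]]]] [y' [r' [a' [Gy' [-> ->]]]]].
    exists (vadd y y'), (r + r'), (a + a').
    split; [exact (extension_add HG Gy Gy')|]. split; [vector_ring|ring].
  - intros b u t [y [r [a [Gy [-> ->]]]]].
    exists (vscale b y), (b * r), (b * a).
    split; [exact (extension_scale HG b Gy)|]. split; [vector_ring|ring].
  - intros u t [y [r [a [Gy [-> ->]]]]]. exact (extension_step_le a Gy).
Qed.

End Constant.

Lemma extension_extend : exists G', extension G' /\ graph_sub G G' /\ exists r, G' x0 r.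
Proof.
  destruct extension_const as [c [c_ge c_le]].
  exists (extension_step c). split; [exact (extension_step_extension c_ge c_le)|]. split.
  - intros u r Gu. exists u, r, 0. split; [exact Gu|]. split; [vector_ring|ring].
  - exists (0 + 1 * c), vzero, 0, 1. split; [exact (extension_zero HG)|].
    split; [vector_ring|reflexivity].
Qed.

End OneStep.

Lemma total_extension_exists : exists G, extension G /\ forall u, W u -> exists r, G u r.
Proof.
  destruct (@premaximal_exists {G | extension G} (exist _ _ graph_f_extension)
              (fun G G' => graph_sub (proj1_sig G) (proj1_sig G')))
    as [[G HG] Gmax].
  - intros G u r; auto.
  - intros G1 G2 G3 H12 H23 u r Gu; auto.
  - intros A Atot.
    set (C := fun G => exists HG : extension G, A (exist _ G HG)).
    assert (C_ext : forall G, C G -> extension G) by (intros G [HG _]; exact HG).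
    assert (C_total : forall G G', C G -> C G' -> graph_sub G G' \/ graph_sub G' G)
      by (intros G G' [HG AG] [HG' AG']; exact (Atot _ _ AG AG')).
    exists (exist _ _ (chain_union_extension C_ext C_total)).
    intros [G HG] AG u r Gu. right. exists G. split; [exists HG; exact AG | exact Gu].
  - exists G. split; [exact HG|].
    intros u Wu. apply NNPP; intro Hu.
    destruct (extension_extend HG Wu (fun r Gr => Hu (ex_intro _ r Gr)))
      as [G' [HG' [sub [r Gr]]]].
    apply Hu; exists r. exact (Gmax (exist _ G' HG') sub u r Gr).
Qed.

Theorem hahn_banach : exists g : (Y -> R) -> R,
  (forall u v, W u -> W v -> g (vadd u v) = g u + g v) /\
  (forall a u, W u -> g (vscale a u) = a * g u) /\
  (forall u, D u -> g u = f u) /\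
  (forall u, W u -> g u <= S u).
Proof.
  destruct total_extension_exists as [G [HG total]].
  set (g := fun u => match excluded_middle_informative (exists r, G u r) with
                     | left H => proj1_sig (constructive_indefinite_description _ H)
                     | right _ => 0 end).
  assert (g_graph : forall u, W u -> G u (g u)).
  { intros u Wu. unfold g. destruct (excluded_middle_informative _) as [H|H].
    - exact (proj2_sig (constructive_indefinite_description _ H)).
    - contradiction (H (total u Wu)). }
  exists g. repeat split.
  - intros u v Wu Wv. apply (extension_fun HG (g_graph _ (W_add Wu Wv))).
    exact (extension_add HG (g_graph u Wu) (g_graph v Wv)).
  - intros a u Wu. apply (extension_fun HG (g_graph _ (W_scale a Wu))).
    exact (extension_scale HG a (g_graph u Wu)).
  - intros u Du. exact (extension_fun HG (g_graph u (D_W Du)) (extension_D HG Du)).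
  - intros u Wu. exact (extension_le HG (g_graph u Wu)).
Qed.

End HahnBanach.

Lemma Lub_Rbar_real (E : R -> Prop) (B v0 : R) :
  (forall v, E v -> v <= B) -> E v0 ->
  (forall v, E v -> v <= real (Lub_Rbar E)) /\
  (forall c, (forall v, E v -> v <= c) -> real (Lub_Rbar E) <= c).
Proof.
  intros HB H0. destruct (Lub_Rbar_correct E) as [ub lub].
  destruct (Lub_Rbar E) as [l| |] eqn:El.
  - split.
    + intros v Ev. exact (ub v Ev).
    + intros c Hc. exact (lub (Finite c) Hc).
  - contradiction (lub (Finite B) HB).
  - contradiction (ub v0 H0).
Qed.

Lemma Glb_Rbar_real (E : R -> Prop) (B v0 : R) :
  (forall v, E v -> B <= v) -> E v0 ->
  (forall v, E v -> real (Glb_Rbar E) <= v) /\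
  (forall c, (forall v, E v -> c <= v) -> c <= real (Glb_Rbar E)).
Proof.
  intros HB H0. destruct (Glb_Rbar_correct E) as [lb glb].
  destruct (Glb_Rbar E) as [l| |] eqn:El.
  - split.
    + intros v Ev. exact (lb v Ev).
    + intros c Hc. exact (glb (Finite c) Hc).
  - contradiction (lb v0 H0).
  - contradiction (glb (Finite B) HB).
Qed.

Definition sup_on {X} (P : X -> Prop) (g : X -> R) : R :=
  real (Lub_Rbar (fun r => exists x, P x /\ r = g x)).

Definition bounded_above {X} (g : X -> R) : Prop := exists B, forall x, g x <= B.

Section SupOn.
Variables (X : Type) (P : X -> Prop).

Lemma sup_on_ub g x : bounded_above g -> P x -> g x <= sup_on P g.
Proof.
  intros [B HB] Px.
  apply (Lub_Rbar_real (B := B) (v0 := g x)); [intros v [y [_ ->]]; auto| |];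
    exists x; auto.
Qed.

Lemma sup_on_le g c : (exists x, P x) -> (forall x, P x -> g x <= c) -> sup_on P g <= c.
Proof.
  intros [x Px] Hc.
  apply (Lub_Rbar_real (B := c) (v0 := g x)).
  - intros v [y [Py ->]]; auto.
  - exists x; auto.
  - intros v [y [Py ->]]; auto.
Qed.

Hypothesis P_nonempty : exists x, P x.

Lemma sup_on_add g h : bounded_above g -> bounded_above h ->
  sup_on P (vadd g h) <= sup_on P g + sup_on P h.
Proof.
  intros Hg Hh. apply sup_on_le; auto.
  intros x Px. unfold vadd.
  pose proof (sup_on_ub Hg Px). pose proof (sup_on_ub Hh Px). lra.
Qed.

Lemma sup_on_scale a g : bounded_above g -> 0 < a -> sup_on P (vscale a g) = a * sup_on P g.
Proof.
  intros [B HB] Ha.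
  assert (Hg : bounded_above g) by (exists B; auto).
  assert (Hag : bounded_above (vscale a g))
    by (exists (a * B); intro x; apply Rmult_le_compat_l; auto; lra).
  apply Rle_antisym.
  - apply sup_on_le; auto. intros x Px.
    apply Rmult_le_compat_l; [lra | exact (sup_on_ub Hg Px)].
  - assert (Hle : sup_on P g <= / a * sup_on P (vscale a g)).
    { apply sup_on_le; auto. intros x Px.
      replace (g x) with (/ a * vscale a g x) by (unfold vscale; field; lra).
      apply Rmult_le_compat_l; [left; apply Rinv_0_lt_compat; lra|].
      exact (sup_on_ub Hag Px). }
    apply (Rmult_le_compat_l a) in Hle; [|lra].
    replace (a * (/ a * sup_on P (vscale a g))) with (sup_on P (vscale a g)) in Hle
      by (field; lra).
    exact Hle.
Qed.

End SupOn.

Section Evaluation.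
Variables (L : Language) (N : Structure L).

Lemma dist_nonneg (x y : N) : 0 <= dist x y.
Proof.
  pose proof (dist_tri N x y x) as Htri. rewrite dist_refl, (dist_sym N y x) in Htri. lra.
Qed.

Lemma eval_bounded (phi : formula L) : exists B, forall e, Rabs (eval N phi e) <= B.
Proof.
  induction phi as [| t1 t2 | r args | phi IH1 psi IH2 | c phi IH | phi IH | phi IH].
  - exists 1; intros; simpl; rewrite Rabs_R1; lra.
  - exists 1; intros e; simpl.
    pose proof (dist_nonneg (teval N t1 e) (teval N t2 e)).
    pose proof (dist_diam N (teval N t1 e) (teval N t2 e)).
    rewrite Rabs_right; lra.
  - exists (Rabs (rinterp r (fun _ => point N)) + Rabs (rlip L r)). intros e; simpl.
    pose proof (rinterp_lip N r (fun j => teval N (args j) e) (fun _ => point N) Rle_0_1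
                  (fun i => dist_diam N _ _)).
    pose proof (Rabs_triang_inv (rinterp r (fun j => teval N (args j) e))
                                (rinterp r (fun _ => point N))).
    pose proof (Rle_abs (rlip L r)). lra.
  - destruct IH1 as [B1 H1], IH2 as [B2 H2]. exists (B1 + B2); intros e; simpl.
    eapply Rle_trans; [apply Rabs_triang|]. specialize (H1 e); specialize (H2 e); lra.
  - destruct IH as [B H]. exists (Rabs c * B); intros e; simpl. rewrite Rabs_mult.
    apply Rmult_le_compat_l; auto. apply Rabs_pos.
  - destruct IH as [B H]. exists B; intros e; simpl.
    assert (Hb : forall x, - B <= eval N phi (scons x e) <= B)
      by (intro x; apply Rabs_le_between, H).
    destruct (@Lub_Rbar_real (fun v => exists x : N, v = eval N phi (scons x e)) B
                (eval N phi (scons (point N) e))) as [ub lub].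
    + intros v [x ->]. apply Hb.
    + exists (point N); reflexivity.
    + apply Rabs_le. split.
      * specialize (ub _ (ex_intro _ (point N) eq_refl)).
        specialize (Hb (point N)). lra.
      * apply lub. intros v [x ->]. apply Hb.
  - destruct IH as [B H]. exists B; intros e; simpl.
    assert (Hb : forall x, - B <= eval N phi (scons x e) <= B)
      by (intro x; apply Rabs_le_between, H).
    destruct (@Glb_Rbar_real (fun v => exists x : N, v = eval N phi (scons x e)) (- B)
                (eval N phi (scons (point N) e))) as [lb glb].
    + intros v [x ->]. apply Hb.
    + exists (point N); reflexivity.
    + apply Rabs_le. split.
      * apply glb. intros v [x ->]. apply Hb.
      * specialize (lb _ (ex_intro _ (point N) eq_refl)).
        specialize (Hb (point N)). lra.
Qed.

Lemma eval_bounded_above (phi : formula L) : bounded_above (eval N phi).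
Proof.
  destruct (eval_bounded phi) as [B HB]. exists B; intro e.
  exact (Rle_trans _ _ _ (Rle_abs _) (HB e)).
Qed.

Lemma eval_inf_spec (phi : formula L) (e : nat -> N) :
  (forall x, eval N (F_inf phi) e <= eval N phi (scons x e)) /\
  (forall c, (forall x, c <= eval N phi (scons x e)) -> c <= eval N (F_inf phi) e).
Proof.
  destruct (eval_bounded phi) as [B HB].
  destruct (@Glb_Rbar_real (fun v => exists x : N, v = eval N phi (scons x e)) (- B)
              (eval N phi (scons (point N) e))) as [lb glb].
  - intros v [x ->]. exact (proj1 (proj1 (Rabs_le_between _ _) (HB _))).
  - exists (point N); reflexivity.
  - split.
    + intros x. apply lb. exists x; reflexivity.
    + intros c Hc. apply glb. intros v [x ->]. apply Hc.
Qed.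

Lemma teval_agree (t : term L) : forall n (e1 e2 : nat -> N),
  term_wf n t -> (forall i, (i < n)%nat -> e1 i = e2 i) -> teval N t e1 = teval N t e2.
Proof.
  induction t as [i | f args IH]; intros n e1 e2 Hw Ha; simpl in *; auto.
  f_equal. apply functional_extensionality; intro j. eapply IH; eauto.
Qed.

Lemma eval_agree (phi : formula L) : forall n (e1 e2 : nat -> N),
  formula_wf n phi -> (forall i, (i < n)%nat -> e1 i = e2 i) ->
  eval N phi e1 = eval N phi e2.
Proof.
  induction phi as [| t1 t2 | r args | phi IH1 psi IH2 | c phi IH | phi IH | phi IH];
    intros n e1 e2 Hw Ha; simpl in *; auto.
  - destruct Hw as [H1 H2]. rewrite (teval_agree H1 Ha), (teval_agree H2 Ha); reflexivity.
  - f_equal. apply functional_extensionality; intro j. eapply teval_agree; eauto.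
  - destruct Hw as [H1 H2]. rewrite (IH1 _ _ _ H1 Ha), (IH2 _ _ _ H2 Ha); reflexivity.
  - erewrite IH; eauto.
  - assert (E : forall x, eval N phi (scons x e1) = eval N phi (scons x e2)).
    { intros x. eapply IH; eauto. intros [|i] Hi; simpl; auto. apply Ha. lia. }
    do 2 f_equal. apply functional_extensionality; intro v.
    apply propositional_extensionality; split; intros [x Hx]; exists x; rewrite Hx; auto.
  - assert (E : forall x, eval N phi (scons x e1) = eval N phi (scons x e2)).
    { intros x. eapply IH; eauto. intros [|i] Hi; simpl; auto. apply Ha. lia. }
    do 2 f_equal. apply functional_extensionality; intro v.
    apply propositional_extensionality; split; intros [x Hx]; exists x; rewrite Hx; auto.
Qed.

Fixpoint inf_closure (k : nat) (phi : formula L) : formula L :=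
  match k with O => phi | S k => F_inf (inf_closure k phi) end.

Lemma inf_closure_wf k : forall m phi,
  formula_wf (k + m) phi -> formula_wf m (inf_closure k phi).
Proof.
  induction k; intros m phi H; simpl; auto.
  apply IHk. rewrite Nat.add_succ_r; auto.
Qed.

Lemma scons_eta {A} (e : nat -> A) : scons (e 0%nat) (fun i => e (S i)) = e.
Proof. apply functional_extensionality; intros [|i]; reflexivity. Qed.

Lemma inf_closure_nonneg k phi :
  (forall e, 0 <= eval N (inf_closure k phi) e) <-> (forall e, 0 <= eval N phi e).
Proof.
  induction k as [|k IH]; simpl; [tauto|]. rewrite <- IH. split.
  - intros H e. rewrite <- (scons_eta e).
    exact (Rle_trans _ _ _ (H _) (proj1 (eval_inf_spec _ _) _)).
  - intros H e. apply (proj2 (eval_inf_spec _ _)). intros x; apply H.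
Qed.

End Evaluation.

Lemma complete_entails_nonneg {L} (T : Theory L) (M : Structure L) n (phi : formula L) :
  complete_theory T -> models M T -> formula_wf n phi ->
  (forall e, 0 <= eval M phi e) -> entails_nonneg T phi.
Proof.
  intros [_ Hc] HM Hw Hpos N HN.
  assert (Hw0 : formula_wf 0 (inf_closure n phi))
    by (apply inf_closure_wf; rewrite Nat.add_0_r; auto).
  apply (inf_closure_nonneg N n). intros e.
  rewrite <- (Hc _ Hw0 M N (fun _ => point M) e HM HN).
  apply inf_closure_nonneg; auto.
Qed.

Section ExtremeTypes.
Variables (L : Language) (T : Theory L) (M : Structure L) (n : nat) (p : formula L -> R).
Hypothesis T_complete : complete_theory T.
Hypothesis M_model : models M T.
Hypothesis p_extreme : extreme_type T n p.

Let p_type : is_type T n p := proj1 p_extreme.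

Definition F_zero : formula L := F_scale 0 F_one.

Lemma F_zero_wf : formula_wf n F_zero.
Proof. exact I. Qed.

Definition dominated (A : (nat -> M) -> Prop) : Prop :=
  forall phi c, formula_wf n phi -> (forall e, A e -> eval M phi e <= c) -> p phi <= c.

Lemma dominated_mono (A B : (nat -> M) -> Prop) :
  (forall e, A e -> B e) -> dominated A -> dominated B.
Proof. intros AB HA phi c Hw H. apply HA; auto. Qed.

Lemma dominated_all : dominated (fun _ => True).
Proof.
  intros phi c Hw H.
  set (psi := F_add (F_scale c F_one) (F_scale (-1) phi)).
  assert (Hpsi : formula_wf n psi) by (unfold psi; simpl; auto).
  assert (Hpos : 0 <= p psi).
  { apply (type_pos p_type Hpsi).
    apply (complete_entails_nonneg T_complete M_model Hpsi).
    intros e; unfold psi; simpl. specialize (H e I). lra. }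
  unfold psi in Hpos.
  rewrite (type_add p_type), !(type_scale p_type), (type_one p_type) in Hpos by (simpl; auto).
  lra.
Qed.

Lemma dominated_ge A phi c : dominated A -> formula_wf n phi ->
  (forall e, A e -> c <= eval M phi e) -> c <= p phi.
Proof.
  intros HA Hw H.
  assert (Hneg : p (F_scale (-1) phi) <= - c).
  { apply HA; [exact Hw|]. intros e Ae; simpl. specialize (H e Ae). lra. }
  rewrite (type_scale p_type) in Hneg by exact Hw. lra.
Qed.

Lemma p_eval_ext phi psi : formula_wf n phi -> formula_wf n psi ->
  (forall e, eval M phi e = eval M psi e) -> p phi = p psi.
Proof.
  intros H1 H2 E.
  assert (D1 : p (F_add phi (F_scale (-1) psi)) <= 0).
  { apply dominated_all; [simpl; auto|]. intros e _; simpl; rewrite E; lra. }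
  assert (D2 : p (F_add psi (F_scale (-1) phi)) <= 0).
  { apply dominated_all; [simpl; auto|]. intros e _; simpl; rewrite E; lra. }
  rewrite (type_add p_type), (type_scale p_type) in D1, D2 by (simpl; auto).
  lra.
Qed.

Lemma dominated_nonempty A : dominated A -> exists e, A e.
Proof.
  intros HA. apply NNPP; intro Hn.
  assert (Hone : p F_one <= 0) by (apply HA; [exact I|]; intros e Ae; exfalso; eauto).
  rewrite (type_one p_type) in Hone. lra.
Qed.

Record linear_on_M (f : formula L -> R) : Prop := {
  linear_add : forall phi psi, formula_wf n phi -> formula_wf n psi ->
    f (F_add phi psi) = f phi + f psi;
  linear_scale : forall c phi, formula_wf n phi -> f (F_scale c phi) = c * f phi;
  linear_eval_ext : forall phi psi,
    (forall e, eval M phi e = eval M psi e) -> f phi = f psi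
}.

Definition dominated_by (A : (nat -> M) -> Prop) (w : R) (f : formula L -> R) : Prop :=
  forall phi c, formula_wf n phi -> (forall e, A e -> eval M phi e <= c) -> f phi <= w * c.

Section Weighted.
Variables (A : (nat -> M) -> Prop) (w : R) (f : formula L -> R).
Hypothesis f_linear : linear_on_M f.
Hypothesis f_dominated : dominated_by A w f.

Lemma dominated_by_weight_nonneg : 0 <= w.
Proof.
  assert (Hz : f F_zero <= w * 1).
  { apply f_dominated; [exact F_zero_wf|]. intros e _; simpl; lra. }
  unfold F_zero in Hz. rewrite (linear_scale f_linear) in Hz by exact I. lra.
Qed.

Lemma dominated_by_zero : w = 0 -> forall phi, formula_wf n phi -> f phi = 0.
Proof.
  intros -> phi Hw.
  destruct (eval_bounded M phi) as [B HB].
  assert (Hle : forall psi, formula_wf n psi -> (forall e, Rabs (eval M psi e) <= B) ->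
                  f psi <= 0).
  { intros psi Hpsi Hb. rewrite <- (Rmult_0_l B). apply f_dominated; [exact Hpsi|].
    intros e _. exact (Rle_trans _ _ _ (Rle_abs _) (Hb e)). }
  assert (Hneg : f (F_scale (-1) phi) <= 0).
  { apply Hle; [exact Hw|]. intros e; simpl.
    rewrite Rabs_mult, Rabs_m1, Rmult_1_l; apply HB. }
  rewrite (linear_scale f_linear) in Hneg by exact Hw.
  pose proof (Hle phi Hw HB). lra.
Qed.

Hypothesis w_pos : 0 < w.

Lemma dominated_by_type : f F_one = w -> is_type T n (fun phi => f phi / w).
Proof.
  intros Hone. constructor.
  - intros phi psi _ _ E. rewrite (linear_eval_ext f_linear (E M M_model)). reflexivity.
  - intros phi psi H1 H2. rewrite (linear_add f_linear) by assumption. field; lra.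
  - intros c phi H1. rewrite (linear_scale f_linear) by assumption. field; lra.
  - intros phi H1 H2.
    assert (Hneg : f (F_scale (-1) phi) <= w * 0).
    { apply f_dominated; [exact H1|]. intros e _; simpl.
      pose proof (H2 M M_model e). lra. }
    rewrite (linear_scale f_linear) in Hneg by exact H1.
    apply Rmult_le_pos; [lra | left; apply Rinv_0_lt_compat; exact w_pos].
  - rewrite Hone. field; lra.
Qed.

Lemma dominated_of_dominated_by :
  (forall phi, formula_wf n phi -> p phi = f phi / w) -> dominated A.
Proof.
  intros Hp phi c Hw H. rewrite (Hp phi Hw).
  apply (Rmult_le_reg_l w); [exact w_pos|].
  replace (w * (f phi / w)) with (f phi) by (field; lra).
  exact (f_dominated Hw H).
Qed.

End Weighted.

Section Split.
Variables A B : (nat -> M) -> Prop.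
Hypothesis AB_dominated : dominated (fun e => A e \/ B e).

(* Tagging the assignments keeps the [A]- and [B]-components apart even
   where [A] and [B] overlap. *)
Definition pair_fun (phi psi : formula L) (y : bool * (nat -> M)) : R :=
  if fst y then eval M phi (snd y) else eval M psi (snd y).

Definition pair_space (v : bool * (nat -> M) -> R) : Prop :=
  exists phi psi, formula_wf n phi /\ formula_wf n psi /\ v = pair_fun phi psi.

Definition pair_diagonal (v : bool * (nat -> M) -> R) : Prop :=
  exists phi, formula_wf n phi /\ v = pair_fun phi phi.

Definition tagged (y : bool * (nat -> M)) : Prop :=
  if fst y then A (snd y) else B (snd y).

Definition diagonal_value (v : bool * (nat -> M) -> R) : R :=
  match excluded_middle_informative (pair_diagonal v) with
  | left H => p (proj1_sig (constructive_indefinite_description _ H))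
  | right _ => 0
  end.

Ltac pair_ring :=
  apply functional_extensionality; intros [[|] ?];
  unfold vadd, vscale, vzero, pair_fun, F_zero; simpl; ring.

Lemma pair_fun_add phi psi phi' psi' :
  vadd (pair_fun phi psi) (pair_fun phi' psi') = pair_fun (F_add phi phi') (F_add psi psi').
Proof. pair_ring. Qed.

Lemma pair_fun_scale a phi psi :
  vscale a (pair_fun phi psi) = pair_fun (F_scale a phi) (F_scale a psi).
Proof. pair_ring. Qed.

Lemma diagonal_value_pair phi : formula_wf n phi -> diagonal_value (pair_fun phi phi) = p phi.
Proof.
  intros Hw. unfold diagonal_value.
  destruct (excluded_middle_informative _) as [H|H].
  - destruct (constructive_indefinite_description _ H) as [psi [Hpsi E]]; simpl.
    apply p_eval_ext; auto. intros e. symmetry. exact (f_equal (fun v => v (true, e)) E).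
  - contradiction H. exists phi; auto.
Qed.

Lemma pair_space_wf phi psi :
  formula_wf n phi -> formula_wf n psi -> pair_space (pair_fun phi psi).
Proof. intros H1 H2. exists phi, psi; auto. Qed.

Lemma pair_space_bounded v : pair_space v -> bounded_above v.
Proof.
  intros [phi [psi [_ [_ ->]]]].
  destruct (eval_bounded_above M phi) as [B1 H1], (eval_bounded_above M psi) as [B2 H2].
  exists (Rmax B1 B2). intros [[|] e]; simpl.
  - exact (Rle_trans _ _ _ (H1 e) (Rmax_l _ _)).
  - exact (Rle_trans _ _ _ (H2 e) (Rmax_r _ _)).
Qed.

Lemma tagged_nonempty : exists y, tagged y.
Proof.
  destruct (dominated_nonempty AB_dominated) as [e [Ae|Be]].
  - exists (true, e); exact Ae.
  - exists (false, e); exact Be.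
Qed.

Lemma pair_extension : exists g : (bool * (nat -> M) -> R) -> R,
  (forall u v, pair_space u -> pair_space v -> g (vadd u v) = g u + g v) /\
  (forall a u, pair_space u -> g (vscale a u) = a * g u) /\
  (forall u, pair_diagonal u -> g u = diagonal_value u) /\
  (forall u, pair_space u -> g u <= sup_on tagged u).
Proof.
  apply hahn_banach.
  - intros u v [a1 [a2 [w1 [w2 ->]]]] [b1 [b2 [w3 [w4 ->]]]].
    rewrite pair_fun_add. exists (F_add a1 b1), (F_add a2 b2); simpl; auto.
  - intros a u [a1 [a2 [w1 [w2 ->]]]].
    rewrite pair_fun_scale. exists (F_scale a a1), (F_scale a a2); simpl; auto.
  - intros u v [a1 [w1 ->]] [b1 [w2 ->]].
    rewrite pair_fun_add. exists (F_add a1 b1); simpl; auto.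
  - intros a u [a1 [w1 ->]].
    rewrite pair_fun_scale. exists (F_scale a a1); simpl; auto.
  - exists F_zero. split; [exact F_zero_wf | pair_ring].
  - intros u [a1 [w1 ->]]. exists a1, a1; auto.
  - intros u v Hu Hv.
    exact (sup_on_add tagged_nonempty (pair_space_bounded Hu) (pair_space_bounded Hv)).
  - intros a u Hu Ha. exact (sup_on_scale tagged_nonempty (pair_space_bounded Hu) Ha).
  - intros u v [a1 [w1 ->]] [b1 [w2 ->]].
    rewrite pair_fun_add, !diagonal_value_pair by (simpl; auto).
    exact (type_add p_type a1 b1 w1 w2).
  - intros a u [a1 [w1 ->]].
    rewrite pair_fun_scale, !diagonal_value_pair by (simpl; auto).
    exact (type_scale p_type a a1 w1).
  - intros u [phi [Hw ->]]. rewrite diagonal_value_pair by exact Hw.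
    apply AB_dominated; [exact Hw|]. intros e Hor.
    assert (Hb := pair_space_bounded (pair_space_wf Hw Hw)).
    destruct Hor as [Ae|Be].
    + exact (sup_on_ub (x := (true, e)) Hb Ae).
    + exact (sup_on_ub (x := (false, e)) Hb Be).
Qed.

Section PairFunctional.
Variable g : (bool * (nat -> M) -> R) -> R.
Hypothesis g_add : forall u v, pair_space u -> pair_space v -> g (vadd u v) = g u + g v.
Hypothesis g_scale : forall a u, pair_space u -> g (vscale a u) = a * g u.

Lemma pair_functional_split phi psi : formula_wf n phi -> formula_wf n psi ->
  g (pair_fun phi psi) = g (pair_fun phi F_zero) + g (pair_fun F_zero psi).
Proof.
  intros H1 H2. rewrite <- g_add by (apply pair_space_wf; auto using F_zero_wf).
  f_equal. pair_ring.
Qed.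

Lemma pair_functional_left : linear_on_M (fun phi => g (pair_fun phi F_zero)).
Proof.
  constructor.
  - intros phi psi H1 H2. rewrite <- g_add by (apply pair_space_wf; auto using F_zero_wf).
    f_equal. pair_ring.
  - intros c phi H1. rewrite <- g_scale by (apply pair_space_wf; auto using F_zero_wf).
    f_equal. pair_ring.
  - intros phi psi E. apply f_equal.
    apply functional_extensionality; intros [[|] e]; unfold pair_fun; simpl; auto.
Qed.

Lemma pair_functional_right : linear_on_M (fun psi => g (pair_fun F_zero psi)).
Proof.
  constructor.
  - intros phi psi H1 H2. rewrite <- g_add by (apply pair_space_wf; auto using F_zero_wf).
    f_equal. pair_ring.
  - intros c phi H1. rewrite <- g_scale by (apply pair_space_wf; auto using F_zero_wf).
    f_equal. pair_ring.
  - intros phi psi E. apply f_equal.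
    apply functional_extensionality; intros [[|] e]; unfold pair_fun; simpl; auto.
Qed.

End PairFunctional.

Lemma dominated_union_decomposition : exists f1 f2 lam,
  linear_on_M f1 /\ linear_on_M f2 /\
  (forall phi, formula_wf n phi -> p phi = f1 phi + f2 phi) /\
  f1 F_one = lam /\ dominated_by A lam f1 /\ dominated_by B (1 - lam) f2.
Proof.
  destruct pair_extension as [g [g_add [g_scale [g_diag g_le]]]].
  set (f1 := fun phi => g (pair_fun phi F_zero)).
  set (f2 := fun psi => g (pair_fun F_zero psi)).
  assert (f1_linear : linear_on_M f1) by exact (pair_functional_left g_add g_scale).
  assert (f2_linear : linear_on_M f2) by exact (pair_functional_right g_add g_scale).
  assert (p_sum : forall phi, formula_wf n phi -> p phi = f1 phi + f2 phi).
  { intros phi Hw. rewrite <- (diagonal_value_pair Hw), <- g_diag by (exists phi; auto).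
    exact (pair_functional_split g_add Hw Hw). }
  assert (one_sum : f1 F_one + f2 F_one = 1)
    by (rewrite <- p_sum by exact I; exact (type_one p_type)).
  assert (g_le_const : forall phi psi c, formula_wf n phi -> formula_wf n psi ->
            (forall y, tagged y -> pair_fun phi psi y <= c) ->
            f1 phi + f2 psi <= c).
  { intros phi psi c H1 H2 Hc. unfold f1, f2. rewrite <- (pair_functional_split g_add H1 H2).
    eapply Rle_trans; [exact (g_le _ (pair_space_wf H1 H2))|].
    exact (sup_on_le tagged_nonempty Hc). }
  exists f1, f2, (f1 F_one).
  do 4 (split; [auto|]). split.
  - intros phi c Hw Hc.
    assert (H := g_le_const phi (F_scale c F_one) c Hw I).
    rewrite (linear_scale f2_linear) in H by exact I.
    enough (f1 phi + c * f2 F_one <= c) by nra.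
    apply H. intros [[|] e] He; unfold pair_fun; simpl; [exact (Hc e He) | lra].
  - intros psi c Hw Hc.
    assert (H := g_le_const (F_scale c F_one) psi c I Hw).
    rewrite (linear_scale f1_linear) in H by exact I.
    enough (c * f1 F_one + f2 psi <= c) by nra.
    apply H. intros [[|] e] He; unfold pair_fun; simpl; [lra | exact (Hc e He)].
Qed.

End Split.

Lemma dominated_union A B : dominated (fun e => A e \/ B e) -> dominated A \/ dominated B.
Proof.
  intros HAB.
  destruct (dominated_union_decomposition HAB)
    as [f1 [f2 [lam [f1_linear [f2_linear [p_sum [f1_one [f1_dom f2_dom]]]]]]]].
  assert (f2_one : f2 F_one = 1 - lam)
    by (pose proof (p_sum F_one I); rewrite (type_one p_type) in *; lra).
  pose proof (dominated_by_weight_nonneg f1_linear f1_dom).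
  pose proof (dominated_by_weight_nonneg f2_linear f2_dom).
  destruct (Req_dec lam 0) as [lam0|lam_ne0]; [|destruct (Req_dec lam 1) as [lam1|lam_ne1]].
  - right. apply (dominated_of_dominated_by (w := 1 - lam) f2_dom); [lra|].
    intros phi Hw. rewrite p_sum, (dominated_by_zero f1_linear f1_dom lam0 Hw) by exact Hw.
    rewrite lam0. field.
  - left. apply (dominated_of_dominated_by (w := lam) f1_dom); [lra|].
    intros phi Hw.
    rewrite p_sum, (dominated_by_zero f2_linear f2_dom (ltac:(lra) : 1 - lam = 0) Hw)
      by exact Hw.
    rewrite lam1. field.
  - left. apply (dominated_of_dominated_by (w := lam) f1_dom); [lra|].
    assert (q_eq : type_eq n (fun phi => f1 phi / lam) (fun phi => f2 phi / (1 - lam))).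
    { apply (proj2 p_extreme) with lam.
      - exact (dominated_by_type f1_linear f1_dom ltac:(lra) f1_one).
      - exact (dominated_by_type f2_linear f2_dom ltac:(lra) f2_one).
      - lra.
      - intros phi Hw. rewrite p_sum by exact Hw. field; lra. }
    intros phi Hw. specialize (q_eq phi Hw). simpl in q_eq.
    rewrite p_sum by exact Hw.
    replace (f2 phi) with ((1 - lam) * (f1 phi / lam)) by (rewrite q_eq; field; lra).
    field; lra.
Qed.

Lemma dominated_bisect A phi m w : dominated A -> formula_wf n phi ->
  (forall e, A e -> m <= eval M phi e <= m + w) ->
  exists A' m', dominated A' /\ (forall e, A' e -> A e) /\
    forall e, A' e -> m' <= eval M phi e <= m' + w / 2.
Proof.
  intros HA Hw Hm.
  set (A1 := fun e => A e /\ eval M phi e <= m + w / 2).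
  set (A2 := fun e => A e /\ m + w / 2 <= eval M phi e).
  assert (H12 : dominated (fun e => A1 e \/ A2 e)).
  { apply (dominated_mono (A := A)); [|exact HA]. intros e Ae. unfold A1, A2.
    destruct (Rle_dec (eval M phi e) (m + w / 2)); [left|right]; split; auto; lra. }
  destruct (dominated_union H12) as [H1|H2].
  - exists A1, m. split; [exact H1|]. split; [intros e [Ae _]; exact Ae|].
    intros e [Ae He]. specialize (Hm e Ae). lra.
  - exists A2, (m + w / 2). split; [exact H2|]. split; [intros e [Ae _]; exact Ae|].
    intros e [Ae He]. specialize (Hm e Ae). lra.
Qed.

Lemma dominated_refine A phi delta : dominated A -> formula_wf n phi -> 0 < delta ->
  exists A' m, dominated A' /\ (forall e, A' e -> A e) /\
    forall e, A' e -> m <= eval M phi e <= m + delta.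
Proof.
  intros HA Hw Hdelta.
  destruct (eval_bounded M phi) as [B0 HB0].
  set (B := Rabs B0 + 1).
  assert (HB : forall e, - B <= eval M phi e <= B).
  { intros e. pose proof (Rle_abs B0). apply Rabs_le_between.
    pose proof (HB0 e). unfold B; lra. }
  assert (B_pos : 0 < B) by (unfold B; pose proof (Rabs_pos B0); lra).
  assert (halving : forall K, exists A' m, dominated A' /\ (forall e, A' e -> A e) /\
            forall e, A' e -> m <= eval M phi e <= m + 2 * B * (/ 2) ^ K).
  { induction K as [|K [A' [m [HA' [sub Hm]]]]].
    - exists A, (- B). split; [exact HA|]. split; [auto|].
      intros e _. specialize (HB e). simpl. lra.
    - destruct (dominated_bisect HA' Hw Hm) as [A'' [m' [HA'' [sub' Hm']]]].
      exists A'', m'. split; [exact HA''|]. split; [auto|].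
      intros e He. specialize (Hm' e He). simpl. lra. }
  destruct (pow_lt_1_zero (/ 2) ltac:(rewrite Rabs_pos_eq; lra) (delta / (2 * B)))
    as [K HK].
  { apply Rdiv_lt_0_compat; lra. }
  destruct (halving K) as [A' [m [HA' [sub Hm]]]].
  exists A', m. split; [exact HA'|]. split; [exact sub|].
  intros e He. specialize (Hm e He).
  specialize (HK K (Nat.le_refl K)). rewrite Rabs_pos_eq in HK by (apply pow_le; lra).
  assert (2 * B * (/ 2) ^ K <= delta).
  { apply (Rmult_lt_compat_l (2 * B)) in HK; [|lra].
    replace (2 * B * (delta / (2 * B))) with delta in HK by (field; lra). lra. }
  lra.
Qed.

Lemma dominated_refine_list (phis : list (formula L)) (delta : R) :
  0 < delta -> List.Forall (formula_wf n) phis -> exists A, dominated A /\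
    List.Forall (fun phi => exists m, forall e, A e -> m <= eval M phi e <= m + delta) phis.
Proof.
  intros Hdelta. induction phis as [|phi phis IH]; intros Hf.
  - exists (fun _ => True). split; [exact dominated_all | constructor].
  - inversion Hf as [|? ? Hw Hf']; subst.
    destruct (IH Hf') as [A [HA Hphis]].
    destruct (dominated_refine HA Hw Hdelta) as [A' [m [HA' [sub Hm]]]].
    exists A'. split; [exact HA'|]. constructor; [exists m; exact Hm|].
    eapply List.Forall_impl; [|exact Hphis]. intros psi [m' Hm']. exists m'; auto.
Qed.

End ExtremeTypes.

Lemma tp_restrict {L} (N : Structure L) n (e : nat -> N) (phi : formula L) :
  formula_wf n phi ->
  tp N (fun i : Fin.t n => e (proj1_sig (Fin.to_nat i))) phi = eval N phi e.
Proof.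
  intros Hw. apply (eval_agree Hw). intros i Hi. unfold tuple_env.
  destruct (Compare_dec.lt_dec i n) as [h|h]; [|contradiction].
  rewrite Fin.to_nat_of_nat. reflexivity.
Qed.

Theorem mainTheorem17 (L : Language) (T : Theory L) (M : Structure L)
  (n : nat) (p : formula L -> R) :
  complete_theory T -> models M T -> extreme_type T n p ->
  limit_of_realized_types M n p.
Proof.
  intros Hc HM Hp phis eps Heps Hf.
  destruct (dominated_refine_list Hc HM Hp (delta := eps / 2) ltac:(lra) Hf)
    as [A [HA Hphis]].
  destruct (dominated_nonempty Hp HA) as [e Ae].
  exists (fun i : Fin.t n => e (proj1_sig (Fin.to_nat i))).
  apply List.Forall_forall. intros phi Hin.
  destruct (proj1 (List.Forall_forall _ _) Hphis phi Hin) as [m Hm].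
  assert (Hw := proj1 (List.Forall_forall _ _) Hf phi Hin).
  rewrite tp_restrict by exact Hw.
  assert (p_le : p phi <= m + eps / 2) by (apply (HA phi _ Hw); intros e' He'; apply Hm, He').
  assert (p_ge : m <= p phi) by (apply (dominated_ge Hp HA Hw); intros e' He'; apply Hm, He').
  specialize (Hm e Ae). apply Rabs_def1; lra.
Qed.
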